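(* Let $X$ be a separable infinite dimensional Banach space and let $T$ be a bounded linear operator on $X$. If $T$ satisfies the Hypercyclicity Criterion, then $T$ satisfies the $\varepsilon$-Hypercyclicity Criterion for every $\varepsilon>0$.
   Context: $T$ satisfies the Hypercyclicity Criterion if there exist a sequence of integers $(n(k))_k$, two dense sets $\mathcal{D}_1,\mathcal{D}_2\subset X$ and maps $S_{n(k)}:\mathcal{D}_2\to X$ such that $T^{n(k)}x\to0$ for all $x\in\mathcal{D}_1$, $S_{n(k)}y\to0$ for all $y\in\mathcal{D}_2$, and $T^{n(k)}S_{n(k)}y\to y$ for all $y\in\mathcal{D}_2$. For $\varepsilon>0$, $T$ satisfies the $\varepsilon$-Hypercyclicity Criterion if there exist a dense set $\mathcal{D}_1\subset X$, a countable set $\mathcal{D}_2=\{y_k:k\in\mathbb{N}\}\subset X$ (with a fixed enumeration) such that for each $x\in X\setminus\{0\}$ there are infinitely many $k$ with $y_k$ in the closed ball $B(x,\varepsilon\|x\|)$, an increasing sequence $(n(k))_k\subset\mathbb{N}$ and maps $S_{n(k)}:\mathcal{D}_2\to X$ such that $\|T^{n(k)}x\|\to0$ for all $x\in\mathcal{D}_1$, $\|S_{n(k)}y_k\|\to0$, and $\|T^{n(k)}S_{n(k)}y_k-y_k\|\to0$ as $k\to\infty$. *)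

From HB Require Import structures.
From mathcomp Require Import all_boot all_order all_algebra.
From mathcomp Require Import all_classical all_reals all_analysis.
Set Implicit Arguments. Unset Strict Implicit. Unset Printing Implicit Defensive.
Import Order.TTheory GRing.Theory Num.Theory.
Import numFieldNormedType.Exports.
Local Open Scope classical_set_scope.
Local Open Scope ring_scope.

Section HC.
Variable K : numFieldType.
Variable X : normedModType K.

Definition separable_space : Prop :=
  exists D : set X, countable D /\ dense D.

Definition infinite_dimensional : Prop :=
  forall n : nat, exists v : 'I_n -> X,
    forall c : 'I_n -> K, \sum_(i < n) c i *: v i = 0 -> forall i, c i = 0.

(* Hypercyclicity Criterion.  T^m x is [iter m T x]; the maps S_{n(k)} are
   [S (n k)], only their values on D2 matter. *)
Definition hypercyclicity_criterion (T : X -> X) : Prop :=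
  exists (n : nat -> nat) (D1 D2 : set X) (S : nat -> X -> X),
    dense D1 /\ dense D2 /\
    (forall x, D1 x -> (fun k => iter (n k) T x) @ \oo --> (0 : X)) /\
    (forall y, D2 y -> (fun k => S (n k) y) @ \oo --> (0 : X)) /\
    (forall y, D2 y -> (fun k => iter (n k) T (S (n k) y)) @ \oo --> y).

(* epsilon-Hypercyclicity Criterion.  D2 = {y k | k : nat} with the fixed
   enumeration y; closed ball B(x, r) = {z | `|z - x| <= r}. *)
Definition eps_hypercyclicity_criterion (eps : K) (T : X -> X) : Prop :=
  exists (D1 : set X) (y : nat -> X) (n : nat -> nat) (S : nat -> X -> X),
    dense D1 /\
    (forall x : X, x != 0 ->
       infinite_set [set k : nat | `|y k - x| <= eps * `|x|]) /\
    {homo n : a b / (a < b)%N} /\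
    (forall x, D1 x -> (fun k => `|iter (n k) T x|) @ \oo --> (0 : K)) /\
    ((fun k => `|S (n k) (y k)|) @ \oo --> (0 : K)) /\
    ((fun k => `|iter (n k) T (S (n k) (y k)) - y k|) @ \oo --> (0 : K)).
End HC.

From HB Require Import structures.
From mathcomp Require Import all_boot all_order all_algebra.
From mathcomp Require Import all_classical all_reals all_analysis.
From mathcomp Require Import ring.
Import Order.TTheory GRing.Theory Num.Theory.
Import numFieldNormedType.Exports.
Local Open Scope classical_set_scope.
Local Open Scope ring_scope.

(* Since X is separable and D2 is dense, some sequence (u m) in D2 approximates
   every x <> 0 up to the relative error eps; let y list it with every term
   repeated infinitely often.  For each k the defect
   |S_{n j} y_k| + |T^{n j} S_{n j} y_k - y_k| tends to 0 as j -> oo, and a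
   diagonal choice j = phi k makes it tend to 0 along k while n (phi k) keeps
   increasing.  The latter is possible because n is unbounded: on a bounded
   range of exponents T^{n j} S_{n j} y -> 0, which would force D2 = {0}. *)

Section Iterates.
Context {K : numFieldType} {X : normedModType K} {T : {linear X -> X}}.
Hypothesis T_cont : continuous T.

Lemma cvg_iter0 i (z : nat -> X) :
  z @ \oo --> 0 -> (fun j => iter i T (z j)) @ \oo --> 0.
Proof.
move=> z0; elim: i => [//|i IHi] /=.
by have := cvg_comp _ _ IHi (T_cont 0); rewrite linear0.
Qed.

Lemma cvg_iter_bounded {B : nat} {m : nat -> nat} {z : nat -> X} :
  z @ \oo --> 0 -> (\forall j \near \oo, (m j <= B)%N) ->
  (fun j => iter (m j) T (z j)) @ \oo --> 0.
Proof.
move=> z0 mB; apply/cvgr0Pnorm_lt => e e_gt0.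
have small_iterates : \forall j \near \oo, forall i : 'I_B.+1, `|iter i T (z j)| < e.
  by apply: filter_forall => i; apply: cvgr0_norm_lt => //; exact: cvg_iter0.
near=> j; have mjB : (m j < B.+1)%N by near: j.
suff /(_ (Ordinal mjB)) : forall i : 'I_B.+1, `|iter i T (z j)| < e by [].
by near: j.
Unshelve. all: end_near.
Qed.

Lemma iter_unbounded {n : nat -> nat} {z : nat -> X} {y : X} :
  y != 0 -> z @ \oo --> 0 -> (fun k => iter (n k) T (z k)) @ \oo --> y ->
  forall B, ~ \forall k \near \oo, (n k <= B)%N.
Proof.
move=> /eqP y_neq0 z0 Tz_y B n_bnd; apply: y_neq0.
exact: (cvg_unique _ Tz_y (cvg_iter_bounded z0 n_bnd)).
Qed.

End Iterates.

Section Thresholds.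
Context {K : numFieldType}.

Fixpoint running_pos_min (w : nat -> K) (m : nat) : K :=
  if m is m'.+1 then
    if 0 < w m' then Num.min (running_pos_min w m') (w m') else running_pos_min w m'
  else 1.

Lemma running_pos_min_gt0 w m : 0 < running_pos_min w m.
Proof.
elim: m => [|m IHm] //=; case: ifPn => // wm_gt0.
by rewrite comparable_lt_min ?IHm ?wm_gt0 // real_comparable ?gtr0_real.
Qed.

Lemma running_pos_min_cmp w m : 0 < w m -> running_pos_min w m >=< w m.
Proof. by move=> wm_gt0; rewrite real_comparable ?gtr0_real ?running_pos_min_gt0. Qed.

Lemma running_pos_min_nonincr w : nonincreasing_seq (running_pos_min w).
Proof.
apply/nonincreasing_seqP => m /=; case: ifPn => // /(running_pos_min_cmp w) cmp.
by rewrite comparable_ge_min ?lexx.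
Qed.

Lemma running_pos_min_le w m : 0 < w m -> running_pos_min w m.+1 <= w m.
Proof.
move=> wm_gt0 /=; rewrite wm_gt0.
by rewrite comparable_ge_min ?lexx ?orbT ?running_pos_min_cmp.
Qed.

(* K need not be archimedean, so thresholds such as 1/k are not available: when
   the positive values of w accumulate at 0, tau is their running minimum along
   an enumeration, otherwise a constant below all of them. *)
Lemma exists_threshold_cvg0 {I : countType} (w : I -> K) :
  (forall i, 0 <= w i) ->
  exists2 tau : nat -> K, (forall k, 0 < tau k) &
    forall b : nat -> K, (forall k, range w (b k)) -> (forall k, b k < tau k) ->
      b @ \oo --> 0.
Proof.
move=> w_ge0.
have [[e0 e0_gt0 w_gap]|no_gap] :=
  pselect (exists2 e0 : K, 0 < e0 & forall i, 0 < w i -> e0 <= w i).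
  exists (fun=> e0) => // b b_range b_lt.
  suff -> : b = fun=> 0 by exact: cvg_cst.
  apply: funext => k; have [i _ wi] := b_range k; have := b_lt k.
  rewrite -wi; have := w_ge0 i; rewrite le0r => /orP[/eqP //|/w_gap].
  by move=> /le_lt_trans/[apply]; rewrite ltxx.
have small_value e : 0 < e -> exists i, 0 < w i < e.
  move=> e_gt0; apply: contrapT => none; apply: no_gap; exists e => // i wi_gt0.
  rewrite real_leNgt ?gtr0_real //; apply/negP => wi_lt.
  by apply: none; exists i; rewrite wi_gt0.
pose v m := if unpickle m is Some i then w i else 0.
exists (running_pos_min v) => [k|b b_range b_lt]; first exact: running_pos_min_gt0.
apply/cvgr0Pnorm_lt => e e_gt0.
have [i /andP[wi_gt0 wi_lt]] := small_value e e_gt0.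
have vi : v (pickle i) = w i by rewrite /v pickleK.
near=> k.
have [j _ wj] := b_range k.
have k_gt : (pickle i < k)%N by near: k; exact: nbhs_infty_gt.
rewrite ger0_norm -?wj // wj (lt_le_trans (b_lt k)) // (le_trans _ (ltW wi_lt)) //.
apply: le_trans (running_pos_min_nonincr v _ _ k_gt) _.
by rewrite -vi running_pos_min_le ?vi.
Unshelve. all: end_near.
Qed.

End Thresholds.

Lemma increasing_cvgn {phi : nat -> nat} :
  {homo phi : a b / (a < b)%N} -> phi @ \oo --> \oo.
Proof.
move=> phi_incr; have id_le k : (k <= phi k)%N.
  by elim: k => // k IHk; exact: leq_ltn_trans IHk (phi_incr _ _ (ltnSn k)).
apply/cvgnyPge => A; near=> k; apply: leq_trans (id_le k).
by near: k; exact: nbhs_infty_ge.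
Unshelve. all: end_near.
Qed.

Lemma diagonal_subsequence {n : nat -> nat} {P : nat -> nat -> Prop} :
  (forall B, ~ \forall j \near \oo, (n j <= B)%N) ->
  (forall k, \forall j \near \oo, P k j) ->
  exists phi : nat -> nat, [/\ {homo phi : a b / (a < b)%N},
    {homo n \o phi : a b / (a < b)%N} & forall k, P k (phi k)].
Proof.
move=> n_unbnd P_near.
have next (p : nat * nat * nat) :
    exists j, [/\ (p.1.2 < j)%N, (p.2 < n j)%N & P p.1.1 j].
  case: p => [[k J] B] /=; apply: contrapT => none; apply: (n_unbnd B).
  near=> j; rewrite leqNgt; apply/negP => Bj; apply: none; exists j; split => //.
    by near: j; exact: nbhs_infty_gt.
  by near: j; exact: P_near.
have /choice[c c_spec] := next.
pose phi := fix phi k := if k is k'.+1 then c (k, phi k', n (phi k')) else c (0, 0, 0)%N.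
have phiS k : (phi k < phi k.+1)%N /\ (n (phi k) < n (phi k.+1))%N.
  by case: (c_spec (k.+1, phi k, n (phi k))).
exists phi; split.
- by apply: (homo_ltn ltn_trans) => k; case: (phiS k).
- by apply: (homo_ltn ltn_trans) => k; case: (phiS k).
- by case=> [|k]; [case: (c_spec (0, 0, 0)%N) | case: (c_spec (k.+1, phi k, n (phi k)))].
Unshelve. all: end_near.
Qed.

Lemma diagonal_cvg0 {K : numFieldType} {n : nat -> nat} {a : nat -> nat -> K} :
  (forall B, ~ \forall j \near \oo, (n j <= B)%N) ->
  (forall k j, 0 <= a k j) -> (forall k, a k @ \oo --> 0) ->
  exists phi : nat -> nat, [/\ {homo phi : a b / (a < b)%N},
    {homo n \o phi : a b / (a < b)%N} & (fun k => a k (phi k)) @ \oo --> 0].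
Proof.
move=> n_unbnd a_ge0 a_cvg0.
have [tau tau_gt0 tau_cvg0] :=
  exists_threshold_cvg0 (fun p : nat * nat => a p.1 p.2) (fun p => a_ge0 p.1 p.2).
have a_lt_tau k : \forall j \near \oo, a k j < tau k.
  by near=> j; rewrite -[a k j]ger0_norm //; near: j; exact: cvgr0_norm_lt.
have [phi [phi_incr nphi_incr a_phi]] := diagonal_subsequence n_unbnd a_lt_tau.
exists phi; split => //.
by apply: tau_cvg0 => // k; exists (k, phi k).
Unshelve. all: end_near.
Qed.

Lemma squeeze_cvg0 {K : numFieldType} {T : Type} {F : set_system T} {FF : Filter F}
    {u v : T -> K} :
  (forall t, 0 <= u t <= v t) -> v @ F --> 0 -> u @ F --> 0.
Proof.
move=> uv v0; apply/cvgr0Pnorm_lt => e e_gt0.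
near=> t; have /andP[u_ge0 u_le] := uv t; have v_ge0 := le_trans u_ge0 u_le.
rewrite ger0_norm // (le_lt_trans u_le) // -(ger0_norm v_ge0).
by near: t; exact: cvgr0_norm_lt.
Unshelve. all: end_near.
Qed.

(* [k] codes a pair [(m, j)] and [repeat_each u k = u m]. *)
Definition repeat_each {T : Type} (u : nat -> T) (k : nat) : T :=
  if @unpickle (nat * nat)%type k is Some (m, _) then u m else u 0%N.

Lemma repeat_each_infinite {T : Type} (u : nat -> T) (m : nat) :
  infinite_set [set k | repeat_each u k = u m].
Proof.
apply/infiniteP/pcard_leP/injfunPex.
exists (fun j => pickle (m, j)) => [j _|i j _ _ /(pcan_inj pickleK) [] //].
by rewrite /= /repeat_each pickleK.
Qed.

Section Density.
Context {K : numFieldType} {X : normedModType K}.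

Lemma dense_approx {D : set X} (x : X) {r : K} :
  dense D -> 0 < r -> exists2 d, D d & `|x - d| < r.
Proof.
move=> D_dense r_gt0.
have [d [xd Dd]] : exists d, ball x r d /\ D d :=
  D_dense _ (ex_intro _ x (ballxx x r_gt0)) (ball_open x r).
by exists d => //; move: xd; rewrite -ball_normE.
Qed.

Lemma dense_neq0 {D : set X} {x : X} : dense D -> x != 0 -> exists2 d, D d & d != 0.
Proof.
move=> D_dense x_neq0; have x_gt0 : 0 < `|x| by rewrite normr_gt0.
have [d Dd xd] := dense_approx x D_dense x_gt0.
by exists d => //; apply: contraTneq xd => ->; rewrite subr0 ltxx.
Qed.

Lemma infinite_dimensional_neq0 : infinite_dimensional X -> exists x : X, x != 0.
Proof.
move=> /(_ 1%N)[v v_free]; exists (v ord0); apply/eqP => v0.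
have := v_free (fun=> 1) _ ord0; rewrite big_ord1 scale1r => /(_ v0) /eqP.
by rewrite oner_eq0.
Qed.

Lemma rel_approx_trans {u d x : X} {c r : K} :
  0 <= c -> `|u - d| <= c * `|d| -> `|d - x| <= r * `|x| ->
  `|u - x| <= (c + r + c * r) * `|x|.
Proof.
move=> c_ge0 ud dx.
have d_le : `|d| <= `|x| + r * `|x|.
  by rewrite -[d](subrK x) (le_trans (ler_normD _ _)) // addrC lerD2l.
apply: le_trans (ler_distD d u x) _; apply: le_trans (lerD ud dx) _.
have -> : (c + r + c * r) * `|x| = c * (`|x| + r * `|x|) + r * `|x| by ring.
by rewrite lerD2r ler_wpM2l.
Qed.

(* Approximate x by a point g m of a countable dense set to relative error
   r = c / (1 + c), then g m by u m in D2 to relative error c = eps / 2;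
   the errors compose to c + r + c * r = eps. *)
Lemma relatively_dense_seq {D2 : set X} {eps : K} :
  separable_space X -> dense D2 -> 0 < eps ->
  exists2 u : nat -> X, (forall m, D2 (u m)) &
    forall x, x != 0 -> exists m, `|u m - x| <= eps * `|x|.
Proof.
move=> [D [D_countable D_dense]] D2_dense eps_gt0.
have /pcard_surjP[g D_range] := D_countable.
pose c := eps / 2; have c_gt0 : 0 < c by rewrite divr_gt0.
have /choice[u u_spec] :
    forall m, exists z, D2 z /\ (g m != 0 -> `|z - g m| <= c * `|g m|).
  move=> m; have [gm0|gm_neq0] := eqVneq (g m) 0.
    have [z D2z _] := dense_approx 0 D2_dense ltr01.
    by exists z; split => //; rewrite gm0 eqxx.
  have gm_gt0 : 0 < c * `|g m| by rewrite mulr_gt0 ?normr_gt0.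
  have [z D2z gmz] := dense_approx (g m) D2_dense gm_gt0.
  by exists z; split => // _; rewrite distrC ltW.
exists u => [m|x x_neq0]; first by case: (u_spec m).
pose r := c / (1 + c).
have r_lt1 : r < 1 by rewrite ltr_pdivrMr ?mul1r ?ltrDr // addr_gt0.
have rx_gt0 : 0 < r * `|x| by rewrite mulr_gt0 ?normr_gt0 ?divr_gt0 ?addr_gt0.
have [d Dd xd] := dense_approx x D_dense rx_gt0.
have [m _ gmd] := D_range d Dd.
have d_neq0 : d != 0.
  by apply: contraTneq xd => ->; rewrite subr0 ltr_pMl ?normr_gt0 // lt_gtF.
have u_gm : `|u m - g m| <= c * `|g m| by case: (u_spec m) => _; apply; rewrite gmd.
have gm_x : `|g m - x| <= r * `|x| by rewrite gmd distrC ltW.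
exists m; apply: le_trans (rel_approx_trans (ltW c_gt0) u_gm gm_x) _.
suff -> : c + r + c * r = eps by [].
by rewrite /r /c; field; rewrite lt0r_neq0 // addr_gt0.
Qed.

End Density.

Theorem proposition3p4 (K : numFieldType) (X : completeNormedModType K)
  (T : {linear X -> X}) :
  separable_space X -> infinite_dimensional X -> continuous T ->
  hypercyclicity_criterion T ->
  forall eps : K, 0 < eps -> eps_hypercyclicity_criterion eps T.
Proof.
move=> X_sep X_infdim T_cont [n [D1 [D2 [S [D1_dense [D2_dense [T_D1 [S_D2 TS_D2]]]]]]]].
move=> eps eps_gt0.
have [u D2u u_approx] := relatively_dense_seq X_sep D2_dense eps_gt0.
pose y := repeat_each u.
have D2y k : D2 (y k) by rewrite /y /repeat_each; case: unpickle => [[]|].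
pose a k j := `|S (n j) (y k)| + `|iter (n j) T (S (n j) (y k)) - y k|.
have a_cvg0 k : a k @ \oo --> 0.
  move/norm_cvg0P: (S_D2 _ (D2y k)) => S_y.
  move/subr_cvg0/norm_cvg0P: (TS_D2 _ (D2y k)) => TS_y.
  by have := cvgD S_y TS_y; rewrite addr0; exact.
have n_unbnd B : ~ \forall j \near \oo, (n j <= B)%N.
  have [x0 x0_neq0] := infinite_dimensional_neq0 X_infdim.
  have [y0 D2y0 y0_neq0] := dense_neq0 D2_dense x0_neq0.
  exact: (iter_unbounded T_cont y0_neq0 (S_D2 _ D2y0) (TS_D2 _ D2y0) B).
have [phi [phi_incr nphi_incr a_phi_cvg0]] :=
  diagonal_cvg0 n_unbnd (fun k j => addr_ge0 (normr_ge0 _) (normr_ge0 _)) a_cvg0.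
exists D1, y, (n \o phi), S; split => //; split; [|split => //; split; [|split]].
- move=> x /u_approx[m um]; apply: sub_infinite_set (repeat_each_infinite u m).
  by move=> k; rewrite /= /y => ->.
- move=> x /T_D1 Tx0; apply/norm_cvg0P.
  exact: (cvg_comp _ _ (increasing_cvgn phi_incr) Tx0).
- by apply: (squeeze_cvg0 _ a_phi_cvg0) => k; rewrite normr_ge0 /= /a lerDl.
- by apply: (squeeze_cvg0 _ a_phi_cvg0) => k; rewrite normr_ge0 /= /a lerDr.
Qed.
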